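(* Fix $\epsilon>0$. For $x\in X$ define $g_\epsilon(x)=\sum_{n=0}^\infty e^{-n\epsilon}\mu_n(x)$ if $\lambda_*(x)=0$, and $g_\epsilon(x)=1$ otherwise; write $g^\alpha_\epsilon=g_\epsilon|_{X_\alpha}$. Then for every $x\in X_\alpha$ with $\lambda_*(x)=0$ and every plaque chain $\mathcal{Q}=\{P_\alpha(x),P_\beta(y)\}$ of length one, $$e^{-\epsilon}g^\alpha_\epsilon(x)\le g^\beta_\epsilon(y)\cdot h_{\mathcal{Q}}'(x)\le e^{\epsilon}g^\alpha_\epsilon(x).$$
   Context: $M$ is a closed Riemannian manifold with a codimension-one $C^1$-foliation with oriented normal bundle; fix a finite regular atlas of transversally orientation-preserving charts $\varphi_\alpha\colon U_\alpha\to(-1,1)^n\times(-1,1)$ with transverse coordinate spaces $X_\alpha=(-1,1)$ and $X$ their disjoint union; $P_\alpha(x)$ is the plaque with transverse coordinate $x$; transition maps $h_{\beta\alpha}$ send $x$ to $y$ when $P_\alpha(x)\cap P_\beta(y)\ne\emptyset$; for a plaque chain $\mathcal{P}$ (sequence of plaques with consecutive ones intersecting) of length $\|\mathcal{P}\|$ (number of plaques minus one), $h_{\mathcal{P}}$ is the composition of transition maps on its maximal connected domain $D_{\mathcal{P}}$. $\mu_0(x)=1$, $\mu_n(x)=\sup\{h'_{\mathcal{P}}(x):x\in D_{\mathcal{P}},\|\mathcal{P}\|\le n\}$, and $\lambda_*(x)=\limsup_n\frac1n\log\mu_n(x)\ge0$; the series defining $g_\epsilon$ converges when $\lambda_*(x)=0$,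 and $\lambda_*$ is constant on holonomy orbits. *)

(* Abstract transverse (holonomy pseudogroup) data of a
   finite regular foliated atlas of a codimension-one C^1 foliation. *)
From HB Require Import structures.
From mathcomp Require Import all_boot all_order all_algebra.
From mathcomp Require Import all_classical all_reals all_analysis.
Set Implicit Arguments. Unset Strict Implicit. Unset Printing Implicit Defensive.
Import Order.TTheory GRing.Theory Num.Theory.
Import numFieldNormedType.Exports.
Local Open Scope classical_set_scope.
Local Open Scope ring_scope.

(* The transverse coordinate space of each chart is (-1,1); the point x of
   X_alpha is written (alpha, x).  [tdom b a] is the set of x such that the
   plaque P_a(x) plaques_meet some plaque of chart b, and [trans b a] = h_{ba} is the
   transition map (only meaningful on [tdom b a]). *)
Record foliated_atlas (R : realType) (I : finType) := FoliatedAtlas {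
  tdom : I -> I -> set R;
  trans : I -> I -> R -> R;
  tdom_sub : forall a b, tdom b a `<=` `]-1, 1[%classic;
  tdom_open : forall a b, open (tdom b a);
  trans_dom : forall a b x, tdom b a x -> tdom a b (trans b a x);
  trans_inv : forall a b x, tdom b a x -> trans a b (trans b a x) = x;
  tdom_self : forall a, tdom a a = `]-1, 1[%classic;
  trans_self : forall a x, tdom a a x -> trans a a x = x;
  trans_derivable : forall a b x, tdom b a x -> derivable (trans b a) x 1;
  trans_C1 : forall a b, {within tdom b a, continuous derive1 (trans b a)};
  trans_orient : forall a b x, tdom b a x -> 0 < derive1 (trans b a) x
}.

Section Chains.
Context {R : realType} {I : finType} (F : foliated_atlas R I).

Definition plaques_meet (a : I) (x : R) (b : I) (y : R) : Prop :=
  tdom F b a x /\ y = trans F b a x.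

(* A plaque chain is given by its first plaque P_{a0}(x0) and the list
   s = [(a1,x1); ...; (an,xn)] of the following plaques; its length is size s. *)
Fixpoint is_chain (a0 : I) (x0 : R) (s : seq (I * R)) : Prop :=
  match s with
  | [::] => `]-1, 1[%classic x0
  | (b, y) :: s' => plaques_meet a0 x0 b y /\ is_chain b y s'
  end.

Fixpoint hchain (a0 : I) (s : seq (I * R)) : R -> R :=
  match s with
  | [::] => id
  | (b, _) :: s' => hchain b s' \o trans F b a0
  end.

Fixpoint dchain (a0 : I) (s : seq (I * R)) : set R :=
  match s with
  | [::] => `]-1, 1[%classic
  | (b, _) :: s' => [set t | tdom F b a0 t /\ dchain b s' (trans F b a0 t)]
  end.

Definition Dchain (a0 : I) (x0 : R) (s : seq (I * R)) : set R :=
  connected_component (dchain a0 s) x0.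

Local Open Scope ereal_scope.

Definition mu (n : nat) (a : I) (x : R) : \bar R :=
  match n with
  | O => 1
  | _ => ereal_sup [set (derive1 (hchain a s) x)%:E | s in
           [set s | exists x0, [/\ is_chain a x0 s, Dchain a x0 s x &
                                   (size s <= n)%N]]]
  end.

Definition lambda_star (a : I) (x : R) : \bar R :=
  limn_esup (fun n => (n%:R^-1)%:E * lne (mu n a x)).

Definition geps (eps : R) (a : I) (x : R) : \bar R :=
  if lambda_star a x == 0 then
    \sum_(0 <= n <oo) ((expR (- (n%:R * eps)))%:E * mu n a x)
  else 1.

End Chains.

(* Prepending the plaque [P_a(x)] to a chain of length at most [n] issuing from
   [P_b(y)] gives a chain of length at most [n+1] issuing from [P_a(x)]; by the
   chain rule, [h'_ba(x) mu_n(y) <= mu_(n+1)(x)], and symmetrically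
   [h'_ab(y) mu_n(x) <= mu_(n+1)(y)] with [h'_ab(y) h'_ba(x) = 1].  Shifting the
   index in the series defining [g_eps] turns these into the two inequalities,
   the factor [e^eps] coming from the shift.  The same comparison shows that
   [lambda_*] vanishes at [y] when it vanishes at [x], so that [g_eps(y)] is
   also given by the series. *)

From mathcomp Require Import all_boot all_order all_algebra.
From mathcomp Require Import all_classical all_reals all_analysis.
From mathcomp Require Import lra ring.
Import Order.TTheory GRing.Theory Num.Theory.
Import numFieldNormedType.Exports.
Local Open Scope classical_set_scope.
Local Open Scope ring_scope.

Section extended_real_bounds.
Context {R : realType}.
Implicit Type u : (\bar R)^nat.
Local Open Scope ereal_scope.

Lemma limn_esup_lt_near u r : limn_esup u < r -> \forall n \near \oo, u n < r.
Proof.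
rewrite /limn_esup limf_esupE => /ereal_inf_lt[_ [V oV <-]] supV.
apply: filterS oV => n Vn; apply: le_lt_trans supV.
by apply: ereal_sup_ubound; exists n.
Qed.

Lemma limn_esup_le_near u (l : R) :
  (forall e : R, (0 < e)%R -> \forall n \near \oo, u n <= (l + e)%:E) ->
  limn_esup u <= l%:E.
Proof.
move=> ule; apply/lee_addgt0Pr => e e0; rewrite /limn_esup limf_esupE.
apply: le_trans (ereal_inf_lbound _) _.
  by exists [set n | u n <= (l + e)%:E]; [exact: ule|reflexivity].
by apply: ge_ereal_sup => _ [n une <-].
Qed.

Lemma nneseries_scale_le_shift (w u : (\bar R)^nat) (k1 k2 : R) :
  (0 <= k1)%R -> (0 <= k2)%R -> (forall n, 0 <= w n) -> (forall n, 0 <= u n) ->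
  (forall n, k1%:E * w n <= k2%:E * u n.+1) ->
  k1%:E * \sum_(0 <= n <oo) w n <= k2%:E * \sum_(0 <= n <oo) u n.
Proof.
move=> k10 k20 w0 u0 wu; rewrite -!nneseriesZl //.
have k2u0 n : 0 <= k2%:E * u n by rewrite mule_ge0.
apply: (@le_trans _ _ (\sum_(1 <= n <oo) (k2%:E * u n))).
  rewrite -(nneseries_addn 1 k2u0).
  apply: lee_nneseries => [n _ _|n _]; first by rewrite mule_ge0.
  by rewrite addn1.
by rewrite (@nneseries_split _ _ 0 1) // leeDr // sume_ge0.
Qed.

Lemma normalized_lne_shift_le (c d : R) (k : nat) (m m' : \bar R) :
  (0 < c)%R -> (0 < d)%R -> (0 < k)%N -> (`|ln c| / d < k%:R)%R ->
  1 <= m -> c%:E * m <= m' -> (k.+1%:R^-1)%:E * lne m' <= d%:E ->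
  (k%:R^-1)%:E * lne m <= (3 * d)%:E.
Proof.
(* [ln m <= ln m' - ln c <= (k+1) d + k d <= 3 k d] *)
move=> c0 d0 k0 kc.
have k1inv0 : (0 < k.+1%:R^-1 :> R)%R by rewrite invr_gt0 ltr0n.
case: m' => [r| |]; last 2 first.
- by move=> _ _ /=; rewrite gt0_muley ?lte_fin // leNgt ltey.
- by case: m => [s| |] //= _; rewrite gt0_muley ?lte_fin.
case: m => [s| |] // s1; last by rewrite gt0_muley ?lte_fin // leNgt ltey.
rewrite lee_fin in s1 => csr.
have s0 : (0 < s)%R := lt_le_trans ltr01 s1.
have r0 : (0 < r)%R by rewrite -lte_fin (lt_le_trans _ csr) // lte_fin mulr_gt0.
rewrite !lne_EFin ?gt_eqF // -!EFinM !lee_fin.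
have lncsr : (ln c + ln s <= ln r)%R.
  by rewrite -lnM ?posrE ?mulr_gt0 // ler_ln ?posrE ?mulr_gt0.
have kR : (1 <= k%:R :> R)%R by rewrite ler1n.
rewrite ler_pdivrMl ?ltr0n // -natr1 => lnr.
rewrite ler_pdivrMl ?ltr0n //.
move: kc; rewrite ltr_pdivrMr // => kc.
have := ler_norm (- ln c); rewrite normrN.
have : (d <= k%:R * d)%R by rewrite ler_peMl // ltW.
nra.
Qed.

End extended_real_bounds.

Section holonomy.
Context {R : realType} {I : finType} (F : foliated_atlas R I).

Lemma derivable_hchain a s t : dchain F a s t -> derivable (hchain F a s) t 1.
Proof.
elim: s a t => [|[c z] s IH] a t /=; first by move=> _; exact: derivable_id.
move=> [tdt ds]; apply/derivable1_diffP; apply: differentiable_comp.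
  exact/derivable1_diffP/trans_derivable.
exact/derivable1_diffP/IH.
Qed.

Lemma derive1_hchain_cons a b z s t :
  tdom F b a t -> dchain F b s (trans F b a t) ->
  derive1 (hchain F a ((b, z) :: s)) t =
  derive1 (hchain F b s) (trans F b a t) * derive1 (trans F b a) t.
Proof.
move=> tdt ds; rewrite derive1_comp //.
- exact: trans_derivable.
- exact: derivable_hchain.
Qed.

Lemma derive1_trans_inv a b x : tdom F b a x ->
  derive1 (trans F a b) (trans F b a x) * derive1 (trans F b a) x = 1.
Proof.
move=> tdx; rewrite -derive1_comp; last 2 first.
- exact: trans_derivable.
- exact/trans_derivable/trans_dom.
rewrite -(derive1_id x) !derive1E; apply: near_eq_derive.
have : open (tdom F b a) by exact: tdom_open.
rewrite openE => /(_ x tdx).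
by apply: filterS => t; exact: trans_inv.
Qed.

(* The chain through [t] visiting the charts of [s]; [hchain] and [dchain]
   ignore the points stored in [s]. *)
Fixpoint chain_through (a : I) (s : seq (I * R)) (t : R) : seq (I * R) :=
  match s with
  | [::] => [::]
  | (c, _) :: s' => (c, trans F c a t) :: chain_through c s' (trans F c a t)
  end.

Lemma hchain_through a s t : hchain F a (chain_through a s t) = hchain F a s.
Proof. by elim: s a t => [|[c z] s IH] a t //=; rewrite IH. Qed.

Lemma dchain_through a s t : dchain F a (chain_through a s t) = dchain F a s.
Proof. by elim: s a t => [|[c z] s IH] a t //=; rewrite IH. Qed.

Lemma size_chain_through a s t : size (chain_through a s t) = size s.
Proof. by elim: s a t => [|[c z] s IH] a t //=; rewrite IH. Qed.

Lemma is_chain_through a s t :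
  dchain F a s t -> is_chain F a t (chain_through a s t).
Proof. by elim: s a t => [|[c z] s IH] a t //= [tdt ds]; split; [split|exact: IH]. Qed.

Local Open Scope ereal_scope.

Lemma derive1_hchain_le_mu a s t n : dchain F a s t -> (size s <= n)%N ->
  (derive1 (hchain F a s) t)%:E <= mu F n a t.
Proof.
case: n => [|n] ds sn; first by case: s ds sn => //= _ _; rewrite derive1_id.
apply: ereal_sup_ubound; exists (chain_through a s t); last by rewrite hchain_through.
exists t; split; first exact: is_chain_through.
- by apply: connected_component_refl; rewrite dchain_through.
- by rewrite size_chain_through.
Qed.

Lemma mu_le_ub a t n M : (0 < n)%N ->
  (forall s, dchain F a s t -> (size s <= n)%N ->
     (derive1 (hchain F a s) t)%:E <= M) ->
  mu F n a t <= M.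
Proof.
case: n => [//|n] _ ub /=; apply: ge_ereal_sup => _ [s [x0 [_ Ds sn]] <-].
by apply: ub => //; exact: connected_component_sub Ds.
Qed.

Lemma mu_ge1 a (t : R) n : (`]-1, 1[%classic t)%R -> 1 <= mu F n a t.
Proof.
by move=> t1; have := @derive1_hchain_le_mu a [::] t n t1 isT; rewrite /= derive1_id.
Qed.

Lemma derive1_trans_mu_le_muS a b t n : tdom F b a t ->
  (derive1 (trans F b a) t)%:E * mu F n b (trans F b a t) <= mu F n.+1 a t.
Proof.
move=> tdt; have c0 : (0 < derive1 (trans F b a) t)%R by exact: trans_orient.
have t'1 := tdom_sub (trans_dom tdt).
rewrite muleC -lee_pdivlMr //; case: n => [|n].
  rewrite /= lee_pdivlMr // mul1e.
  have := @derive1_hchain_le_mu a [:: (b, trans F b a t)] t 1.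
  by rewrite derive1_hchain_cons //= derive1_id mul1r; apply.
apply: mu_le_ub => // s ds sn; rewrite lee_pdivlMr //.
have := @derive1_hchain_le_mu a ((b, 0%R) :: s) t n.+2.
by rewrite derive1_hchain_cons //; apply.
Qed.

Lemma lambda_star_trans_eq0 a b x : tdom F b a x -> lambda_star F a x = 0 ->
  lambda_star F b (trans F b a x) = 0.
Proof.
move=> tdx la0; set y := trans F b a x; set c := derive1 (trans F b a) x.
have c0 : (0 < c)%R by exact: trans_orient.
have y1 : (`]-1, 1[%classic y)%R by exact: tdom_sub (trans_dom tdx).
apply/le_anti/andP; split; last first.
  apply: limf_esup_ge0 => [|n]; first exact: filter_not_empty.
  by rewrite mule_ge0 ?lee_fin ?invr_ge0 // lne_ge0 // mu_ge1.
apply: limn_esup_le_near => e e0; rewrite add0r.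
have d0 : (0 < e / 3)%R by rewrite divr_gt0.
have /limn_esup_lt_near la_d : lambda_star F a x < (e / 3)%:E by rewrite la0 lte_fin.
have [N _ la_dS] := cvg_addnr 1 _ la_d.
have -> : e = (3 * (e / 3))%R by rewrite mulrC -mulrA mulVf ?mulr1.
near=> n; apply: (@normalized_lne_shift_le R c (e / 3) n _ (mu F n.+1 a x)) => //.
- by near: n; exact: nbhs_infty_gt.
- by near: n; exact: nbhs_infty_gtr.
- exact: mu_ge1.
- exact: derive1_trans_mu_le_muS.
- by near: n; exists N => // n /la_dS; rewrite /= addn1 => /ltW.
Unshelve. all: by end_near.
Qed.

Definition gseries (eps : R) (a : I) (x : R) : \bar R :=
  \sum_(0 <= n <oo) ((expR (- (n%:R * eps)))%:E * mu F n a x).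

Lemma geps_lambda_star_eq0 eps a x :
  lambda_star F a x = 0 -> geps F eps a x = gseries eps a x.
Proof. by rewrite /geps => ->; rewrite eqxx. Qed.

Lemma gseries_term_ge0 eps a x n : (`]-1, 1[%classic x)%R ->
  0 <= (expR (- (n%:R * eps)))%:E * mu F n a x.
Proof.
by move=> x1; rewrite mule_ge0 ?lee_fin ?expR_ge0 // (le_trans _ (mu_ge1 a x n x1)).
Qed.

Lemma gseries_trans_le eps a b x : tdom F b a x ->
  (derive1 (trans F b a) x)%:E * gseries eps b (trans F b a x) <=
  (expR eps)%:E * gseries eps a x.
Proof.
move=> tdx; have c0 : (0 < derive1 (trans F b a) x)%R by exact: trans_orient.
apply: nneseries_scale_le_shift => [||n|n|n]; [exact: ltW|exact: expR_ge0| | |].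
- exact/gseries_term_ge0/tdom_sub/trans_dom.
- exact: gseries_term_ge0 (tdom_sub tdx).
rewrite [X in _ <= X]muleA -EFinM -expRD.
have -> : (eps - n.+1%:R * eps = - (n%:R * eps))%R by rewrite -natr1; ring.
rewrite muleCA; apply: lee_wpmul2l; first by rewrite lee_fin expR_ge0.
exact: derive1_trans_mu_le_muS.
Qed.

Lemma gseries_trans_ge eps a b x : tdom F b a x ->
  (expR (- eps))%:E * gseries eps a x <=
  (derive1 (trans F b a) x)%:E * gseries eps b (trans F b a x).
Proof.
move=> tdx; have c0 : (0 < derive1 (trans F b a) x)%R by exact: trans_orient.
have := gseries_trans_le eps _ _ _ (trans_dom tdx).
rewrite (trans_inv tdx) => le_yx.
have cc' := derive1_trans_inv _ _ _ tdx.
set c := derive1 (trans F b a) x in c0 cc' *.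
set c' := derive1 (trans F a b) _ in le_yx cc'.
have -> : (expR (- eps))%:E * gseries eps a x =
    (expR (- eps) * c)%:E * (c'%:E * gseries eps a x).
  by rewrite muleA -EFinM -mulrA [(c * c')%R]mulrC cc' mulr1.
apply: le_trans (lee_wpmul2l _ le_yx) _.
  by rewrite lee_fin mulr_ge0 ?expR_ge0 // ltW.
by rewrite muleA -EFinM mulrAC -expRD addNr expR0 mul1r.
Qed.

End holonomy.

Theorem lemma4p5 (R : realType) (I : finType) (F : foliated_atlas R I)
  (eps : R) (heps : 0 < eps) (a b : I) (x y : R) :
  lambda_star F a x = 0%E ->
  plaques_meet F a x b y ->
  ((expR (- eps))%:E * geps F eps a x <=
     geps F eps b y * (derive1 (trans F b a) x)%:E <=
   (expR eps)%:E * geps F eps a x)%E.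
Proof.
move=> la0 [tdx ->].
rewrite geps_lambda_star_eq0 // geps_lambda_star_eq0; last first.
  exact: lambda_star_trans_eq0.
rewrite [(gseries F eps b _ * _)%E]muleC; apply/andP; split.
- exact: gseries_trans_ge.
- exact: gseries_trans_le.
Qed.
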